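(* Let $O$ be the closed disk of radius $R>0$ centered at the origin. Consider three pupils $P_1,P_2,P_3$, where $P_i$ is the closed disk of center $c_i\in\mathbb{R}^2$ and radius $\rho_i\ge0$ (radius $0$ meaning the single point $c_i$). Call the configuration valid if $O\subseteq\bigcup_{i,j=1}^3 D_{ij}$, where $D_{ij}$ is the closed disk of center $c_i-c_j$ and radius $\rho_i+\rho_j$. Then, among valid configurations, those in which one radius equals $R/2$ and the other two are $0$ (with arbitrary centers) minimize $\rho_1+\rho_2+\rho_3$; that is, every such configuration is valid, and every valid configuration satisfies $\rho_1+\rho_2+\rho_3\ge R/2$.
   Context: $D_{ij}=P_i\ominus P_j=\{a-b\mid a\in P_i,b\in P_j\}$ (Minkowski difference); $\bigcup_{i,j}D_{ij}$ is the auto-correlation support of the pupils. *)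

From Stdlib Require Import Reals Lra.
Open Scope R_scope.

Definition pt := (R * R)%type.

Definition in_disk (c : pt) (r : R) (p : pt) : Prop :=
  (fst p - fst c)^2 + (snd p - snd c)^2 <= r^2.

(* Three pupils indexed by i in {0,1,2}; centers c i, radii rho i. *)
Definition in_D (c : nat -> pt) (rho : nat -> R) (i j : nat) (p : pt) : Prop :=
  in_disk (fst (c i) - fst (c j), snd (c i) - snd (c j)) (rho i + rho j) p.

Definition valid (Rad : R) (c : nat -> pt) (rho : nat -> R) : Prop :=
  forall p : pt, in_disk (0, 0) Rad p ->
    exists i j, (i < 3)%nat /\ (j < 3)%nat /\ in_D c rho i j p.

(* Sample the circle of radius R at the vertices of a regular 24-gon.  If
   rho_1 + rho_2 + rho_3 < R/2, the disks D_ii are centred at the origin with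
   radius < R and contain no vertex, and every other D_ij has radius
   b = rho_i + rho_j < R/2.  Two vertices k steps apart along the 24-gon are at
   distance at least kR/4 when k <= 4, and at least R when k >= 4, so the
   vertices inside D_ij are pairwise at most 8b/R <= 3 steps apart; there are
   at most 1 + 8b/R of them.  The six off-diagonal radii add up to
   4 (rho_1 + rho_2 + rho_3) < 2R, so at most 6 + 16 = 22 < 24 vertices are
   covered, contradicting validity. *)

From Stdlib Require Import Reals Lra Lia Psatz.
From mathcomp Require ssreflect ssrbool ssrfun eqtype ssrnat fintype finset bigop.
Open Scope R_scope.

Definition cdist (n j l : nat) : nat :=
  Nat.min (Nat.max (j - l) (l - j)) (n - Nat.max (j - l) (l - j)).

Lemma cdist_le_cases n d j l : (j < n)%nat -> (l < n)%nat -> (cdist n j l <= d)%nat ->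
  (j <= l + d /\ l <= j + d)%nat \/ (j + n <= l + d)%nat \/ (l + n <= j + d)%nat.
Proof. unfold cdist. lia. Qed.

(* The position of [x] in the window [a - d, a + d] of Z/nZ, as a number in [0, 2d]. *)
Definition offset (n d a x : nat) : nat :=
  if (x + d <? a)%nat then (x + n + d - a)%nat
  else if (a + d <? x)%nat then (x + d - a - n)%nat
  else (x + d - a)%nat.

Lemma offset_cases n d a x :
  (x + d < a /\ offset n d a x = x + n + d - a)%nat \/
  (a + d < x /\ offset n d a x = x + d - a - n)%nat \/
  (a <= x + d /\ x <= a + d /\ offset n d a x = x + d - a)%nat.
Proof.
  unfold offset.
  destruct (Nat.ltb_spec (x + d) a), (Nat.ltb_spec (a + d) x); lia.
Qed.

Lemma offset_le n d a x y :
  (x < n)%nat -> (y < n)%nat -> (a < n)%nat -> (4 * d <= n)%nat ->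
  (cdist n x a <= d)%nat -> (cdist n y a <= d)%nat -> (cdist n x y <= d)%nat ->
  (offset n d a x <= offset n d a y + d)%nat.
Proof.
  intros hx hy ha hd hxa hya hxy.
  apply cdist_le_cases in hxa, hya, hxy; try assumption.
  destruct (offset_cases n d a x) as [[? ->]|[[? ->]|[? [? ->]]]];
  destruct (offset_cases n d a y) as [[? ->]|[[? ->]|[? [? ->]]]]; lia.
Qed.

Lemma offset_inj n d a x y :
  (x < n)%nat -> (y < n)%nat -> (a < n)%nat -> (4 * d <= n)%nat ->
  (cdist n x a <= d)%nat -> (cdist n y a <= d)%nat ->
  offset n d a x = offset n d a y -> x = y.
Proof.
  intros hx hy ha hd hxa hya.
  apply cdist_le_cases in hxa, hya; try assumption.
  destruct (offset_cases n d a x) as [[? ->]|[[? ->]|[? [? ->]]]];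
  destruct (offset_cases n d a y) as [[? ->]|[[? ->]|[? [? ->]]]]; lia.
Qed.

Definition dist2 (p q : pt) : R := (fst p - fst q) ^ 2 + (snd p - snd q) ^ 2.

Definition vertex (n : nat) (Rad : R) (k : nat) : pt :=
  (Rad * cos (INR k * (2 * PI / INR n)), Rad * sin (INR k * (2 * PI / INR n))).

Lemma dist2_vertex_origin n Rad k : dist2 (vertex n Rad k) (0, 0) = Rad ^ 2.
Proof.
  unfold dist2, vertex; simpl.
  pose proof (sin2_cos2 (INR k * (2 * PI / INR n))) as e. unfold Rsqr in e. nra.
Qed.

Lemma dist2_vertex n Rad j l :
  dist2 (vertex n Rad j) (vertex n Rad l) =
  2 * Rad ^ 2 * (1 - cos ((INR j - INR l) * (2 * PI / INR n))).
Proof.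
  set (t := 2 * PI / INR n).
  replace ((INR j - INR l) * t) with (INR j * t - INR l * t) by ring.
  rewrite cos_minus. unfold dist2, vertex; fold t; simpl.
  pose proof (sin2_cos2 (INR j * t)) as ej. pose proof (sin2_cos2 (INR l * t)) as el.
  unfold Rsqr in ej, el.
  transitivity (Rad ^ 2 * (sin (INR j * t) * sin (INR j * t) + cos (INR j * t) * cos (INR j * t))
    + Rad ^ 2 * (sin (INR l * t) * sin (INR l * t) + cos (INR l * t) * cos (INR l * t))
    - 2 * Rad ^ 2 * (cos (INR j * t) * cos (INR l * t) + sin (INR j * t) * sin (INR l * t))).
  - ring.
  - rewrite ej, el. ring.
Qed.

Lemma dist2_in_disk_le z r p q : in_disk z r p -> in_disk z r q -> dist2 p q <= 4 * r ^ 2.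
Proof.
  destruct z as [z1 z2], p as [x1 y1], q as [x2 y2]. unfold in_disk, dist2; simpl.
  intros hp hq.
  pose proof (pow2_ge_0 (x1 + x2 - 2 * z1)). pose proof (pow2_ge_0 (y1 + y2 - 2 * z2)).
  nra.
Qed.

Lemma cos_cdist n j l : (j < n)%nat -> (l < n)%nat ->
  cos ((INR j - INR l) * (2 * PI / INR n)) = cos (INR (cdist n j l) * (2 * PI / INR n)).
Proof.
  intros hj hl.
  assert (hn : INR n <> 0) by (apply not_0_INR; lia).
  pose (m := Nat.max (j - l) (l - j)).
  assert (hm : (m < n)%nat) by (unfold m; lia).
  assert (habs : cos ((INR j - INR l) * (2 * PI / INR n)) = cos (INR m * (2 * PI / INR n))).
  { unfold m. destruct (Nat.le_ge_cases l j).
    - rewrite Nat.max_l, minus_INR by lia. reflexivity.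
    - rewrite Nat.max_r, minus_INR by lia. rewrite <- cos_neg. f_equal. ring. }
  rewrite habs. unfold cdist. fold m.
  destruct (Nat.le_ge_cases m (n - m)).
  - rewrite Nat.min_l by assumption. reflexivity.
  - rewrite Nat.min_r, minus_INR by lia.
    replace ((INR n - INR m) * (2 * PI / INR n)) with (2 * PI - INR m * (2 * PI / INR n))
      by (field; exact hn).
    rewrite cos_minus, cos_2PI, sin_2PI. ring.
Qed.

Lemma sqrt3_lt : sqrt 3 < 7 / 4.
Proof. pose proof (sqrt_sqrt 3). pose proof (sqrt_pos 3). nra. Qed.

Lemma sqrt2_gt : 7 / 5 < sqrt 2.
Proof. pose proof (sqrt_sqrt 2). pose proof (sqrt_pos 2). nra. Qed.

Lemma cos_PI12_sqr_le : cos (PI / 12) ^ 2 <= 15 / 16.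
Proof.
  pose proof (cos_2a_cos (PI / 12)) as e.
  replace (2 * (PI / 12)) with (PI / 6) in e by field. rewrite cos_PI6 in e.
  pose proof sqrt3_lt. simpl. lra.
Qed.

Lemma one_sub_cos_vertex_ge k : (k <= 12)%nat ->
  INR (Nat.min k 4) ^ 2 <= 32 * (1 - cos (INR k * (2 * PI / INR 24))).
Proof.
  intros hk. replace (INR 24) with 24 by (simpl; ring).
  destruct k as [|[|[|[|k]]]].
  - simpl INR. rewrite Rmult_0_l, cos_0. lra.
  - simpl INR. replace (1 * (2 * PI / 24)) with (PI / 12) by field.
    pose proof cos_PI12_sqr_le. nra.
  - simpl INR. replace ((1 + 1) * (2 * PI / 24)) with (PI / 6) by field.
    rewrite cos_PI6. pose proof sqrt3_lt. lra.
  - simpl INR. replace ((1 + 1 + 1) * (2 * PI / 24)) with (PI / 4) by field.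
    rewrite cos_PI4. pose proof sqrt2_gt.
    assert (1 / sqrt 2 <= 23 / 32).
    { apply Rmult_le_reg_r with (sqrt 2); [lra|].
      unfold Rdiv. rewrite Rmult_1_l, Rinv_l by lra. lra. }
    lra.
  - rewrite Nat.min_r by lia.
    assert (hk4 : 4 <= INR (S (S (S (S k)))) <= 12).
    { split; [replace 4 with (INR 4) by (simpl; ring) | replace 12 with (INR 12) by (simpl; ring)];
        apply le_INR; lia. }
    assert (cos (INR (S (S (S (S k)))) * (2 * PI / 24)) <= cos (PI / 3)).
    { pose proof PI_RGT_0. apply cos_decr_1; nra. }
    rewrite cos_PI3 in *. simpl (INR 4). lra.
Qed.

Lemma cdist_vertices_in_disk Rad z b j l :
  0 < Rad -> 0 <= b -> 2 * b < Rad -> (j < 24)%nat -> (l < 24)%nat ->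
  in_disk z b (vertex 24 Rad j) -> in_disk z b (vertex 24 Rad l) ->
  (cdist 24 j l <= 3)%nat /\ INR (cdist 24 j l) * Rad <= 8 * b.
Proof.
  intros hR hb hbR hj hl hpj hpl.
  assert (hd12 : (cdist 24 j l <= 12)%nat) by (unfold cdist; lia).
  assert (hchord : INR (Nat.min (cdist 24 j l) 4) ^ 2 * Rad ^ 2 <= 64 * b ^ 2).
  { pose proof (dist2_in_disk_le _ _ _ _ hpj hpl) as hle.
    rewrite dist2_vertex, cos_cdist in hle by assumption.
    pose proof (one_sub_cos_vertex_ge _ hd12). nra. }
  assert (hd3 : (cdist 24 j l <= 3)%nat).
  { destruct (Nat.le_gt_cases (cdist 24 j l) 3) as [|h]; [assumption|].
    rewrite Nat.min_r in hchord by lia. simpl INR in hchord. nra. }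
  rewrite Nat.min_l in hchord by lia.
  split; [exact hd3|].
  pose proof (pos_INR (cdist 24 j l)). nra.
Qed.

Lemma single_pupil_valid Rad (c : nat -> pt) k : (k < 3)%nat ->
  valid Rad c (fun i => if Nat.eqb i k then Rad / 2 else 0).
Proof.
  intros hk p hp. exists k, k. repeat split; try exact hk.
  unfold in_D, in_disk in *. rewrite Nat.eqb_refl, !Rminus_diag.
  replace (Rad / 2 + Rad / 2) with Rad by field. exact hp.
Qed.

(* [ssrnat] is imported only inside this module: its boolean [<] on [nat] would
   change the meaning of [(k < 3)%nat] in the statement of [lemma6]. *)
Module VertexCount.
Import ssreflect ssrbool ssrfun eqtype ssrnat fintype finset bigop.
Local Open Scope nat_scope.

Lemma card_le_of_diam (T : finType) (C : {set T}) (f : T -> nat) d :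
  {in C &, injective f} -> {in C &, forall x y, f x <= f y + d} -> #|C| <= d.+1.
Proof.
move=> f_inj f_diam.
have [-> | [a aC]] := set_0Vmem C; first by rewrite cards0.
have [m mC m_min] : exists2 m, m \in C & forall x, x \in C -> f m <= f x.
  by exists [arg min_(x < a in C) f x]; case: arg_minnP.
pose g x : 'I_d.+1 := inord (f x - f m).
have g_small x : x \in C -> f x - f m < d.+1 by move=> xC; rewrite ltnS leq_subLR f_diam.
have g_inj : {in C &, injective g}.
  move=> x y xC yC /(congr1 val); rewrite /g /= !inordK ?g_small // => e.
  by apply: f_inj => //; rewrite -(subnK (m_min _ xC)) e subnK ?m_min.
rewrite -(card_in_imset g_inj).
by apply: leq_trans (max_card _) _; rewrite card_ord.
Qed.

Lemma card_le_of_cdist_le n (C : {set 'I_n}) d : 4 * d <= n ->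
  {in C &, forall x y : 'I_n, (cdist n x y <= d)%coq_nat} -> #|C| <= d.+1.
Proof.
move=> /leP hd C_near.
have [-> | [a aC]] := set_0Vmem C; first by rewrite cards0.
apply: (@card_le_of_diam _ C (fun x : 'I_n => offset n d a x)).
  move=> x y xC yC e; apply: val_inj.
  apply: (offset_inj n d a) e; solve [exact: hd | by apply/ltP | by apply: C_near].
move=> x y xC yC; apply/leP.
apply: (offset_le n d a); solve [exact: hd | by apply/ltP | by apply: C_near].
Qed.

Lemma card_bigcup_le {I T : finType} (P : pred I) (F : I -> {set T}) :
  #|\bigcup_(i | P i) F i| <= \sum_(i | P i) #|F i|.
Proof.
elim/big_rec2: _ => [|i U s _ hU]; first by rewrite cards0.
by apply: leq_trans (leq_card_setU _ _) _; rewrite leq_add2l.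
Qed.

Local Open Scope R_scope.

Definition vertices_in (n : nat) (Rad : R) (z : pt) (r : R) : {set 'I_n} :=
  [set k : 'I_n | Rle_dec (dist2 (vertex n Rad k) z) (r ^ 2)].

Lemma in_vertices_inP n Rad z r (k : 'I_n) :
  reflect (in_disk z r (vertex n Rad k)) (k \in vertices_in n Rad z r).
Proof. by rewrite inE; apply: sumboolP. Qed.

Lemma vertices_in_origin n Rad r : 0 <= r < Rad -> vertices_in n Rad (0, 0) r = set0.
Proof.
move=> hr; apply/setP => k; rewrite !inE; case: Rle_dec => // h; exfalso.
rewrite dist2_vertex_origin in h; nra.
Qed.

Lemma card_vertices_in_le Rad z b : 0 < Rad -> 0 <= b -> 2 * b < Rad ->
  INR #|vertices_in 24 Rad z b| * Rad <= Rad + 8 * b.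
Proof.
move=> hR hb hbR; set C := vertices_in 24 Rad z b.
have C_near x y : x \in C -> y \in C ->
    (cdist 24 x y <= 3)%coq_nat /\ INR (cdist 24 x y) * Rad <= 8 * b.
  move=> /in_vertices_inP xC /in_vertices_inP yC.
  exact: (cdist_vertices_in_disk Rad z b x y hR hb hbR (ltP (ltn_ord x)) (ltP (ltn_ord y)) xC yC).
have [-> | C_gt0] := posnP #|C|; first by rewrite /=; lra.
pose F (p : 'I_24 * 'I_24) := cdist 24 p.1 p.2.
have CC_gt0 : (0 < #|setX C C|)%N by rewrite cardsX muln_gt0 C_gt0.
have [[x y] /setXP[xC yC] F_max] := eq_bigmax_cond F CC_gt0.
have [/leP hd3 hdb] := C_near x y xC yC.
have hC : (#|C| <= (F (x, y)).+1)%N.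
  apply: card_le_of_cdist_le.
    by apply: (@leq_trans (4 * 3)); rewrite // leq_mul2l /F /= hd3.
  move=> u v uC vC; apply/leP; rewrite -F_max.
  by apply: (leq_bigmax_cond (F := F) (u, v)); apply/setXP.
apply: (Rle_trans _ ((INR (F (x, y)) + 1) * Rad)); last by rewrite /F /=; lra.
apply: Rmult_le_compat_r; first lra.
by rewrite -S_INR; apply/le_INR/leP.
Qed.

Definition pupil_vertices Rad (c : nat -> pt) (rho : nat -> R) (i j : nat) : {set 'I_24} :=
  vertices_in 24 Rad (fst (c i) - fst (c j), snd (c i) - snd (c j)) (rho i + rho j).

Lemma valid_vertices_covered Rad c rho : valid Rad c rho ->
  (24 <= \sum_(i < 3) \sum_(j < 3) #|pupil_vertices Rad c rho i j|)%N.
Proof.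
move=> hv.
have cover : [set: 'I_24] \subset \bigcup_(i < 3) \bigcup_(j < 3) pupil_vertices Rad c rho i j.
  apply/subsetP => k _.
  have k_in_O : in_disk (0, 0) Rad (vertex 24 Rad k).
    by rewrite /in_disk -/(dist2 _ _) dist2_vertex_origin; lra.
  have [i [j [/ltP hi [/ltP hj hk]]]] := hv _ k_in_O.
  apply/bigcupP; exists (Ordinal hi) => //; apply/bigcupP; exists (Ordinal hj) => //.
  exact/in_vertices_inP.
rewrite -{1}(card_ord 24) -cardsT; apply: (leq_trans (subset_leq_card cover)).
apply: leq_trans (card_bigcup_le _ _) _; apply: leq_sum => i _.
exact: card_bigcup_le.
Qed.

Lemma radii_sum_ge Rad (c : nat -> pt) (rho : nat -> R) : 0 < Rad ->
  (forall i, (i < 3)%coq_nat -> 0 <= rho i) -> valid Rad c rho ->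
  rho 0%N + rho 1%N + rho 2%N >= Rad / 2.
Proof.
move=> hR hpos hv; apply: Rnot_lt_ge => hsum.
have [h0 h1 h2] : [/\ 0 <= rho 0%N, 0 <= rho 1%N & 0 <= rho 2%N].
  by split; apply: hpos; lia.
(* Naming the cardinalities keeps their occurrences syntactically equal for [lra]. *)
pose N (i j : nat) := #|pupil_vertices Rad c rho i j|.
have covered : (24 <= \sum_(i < 3) \sum_(j < 3) N i j)%N by exact: valid_vertices_covered.
have diag i : 2 * rho i < Rad -> 0 <= rho i -> INR (N i i) = 0.
  by move=> hi hi0; rewrite /N /pupil_vertices !Rminus_diag vertices_in_origin ?cards0 //; lra.
have off i j : 0 <= rho i + rho j -> 2 * (rho i + rho j) < Rad ->
    INR (N i j) * Rad <= Rad + 8 * (rho i + rho j).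
  exact: card_vertices_in_le.
rewrite !big_ord_recr !big_ord0 /= in covered.
move/leP: covered; rewrite -!plusE => /le_INR; rewrite !plus_INR => covered.
rewrite (diag 0%N) ?(diag 1%N) ?(diag 2%N) in covered; [|lra..].
have o01 := off 0%N 1%N ltac:(lra) ltac:(lra).
have o02 := off 0%N 2%N ltac:(lra) ltac:(lra).
have o10 := off 1%N 0%N ltac:(lra) ltac:(lra).
have o12 := off 1%N 2%N ltac:(lra) ltac:(lra).
have o20 := off 2%N 0%N ltac:(lra) ltac:(lra).
have o21 := off 2%N 1%N ltac:(lra) ltac:(lra).
have := Rmult_le_compat_r Rad _ _ (Rlt_le _ _ hR) covered.
simpl INR; lra.
Qed.

End VertexCount.

Theorem lemma6 (Rad : R) (hR : 0 < Rad) :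
  (* every configuration with one radius R/2 and the other two 0 is valid *)
  (forall (c : nat -> pt) (k : nat), (k < 3)%nat ->
     valid Rad c (fun i => if Nat.eqb i k then Rad / 2 else 0))
  /\
  (* every valid configuration has total radius at least R/2 *)
  (forall (c : nat -> pt) (rho : nat -> R),
     (forall i, (i < 3)%nat -> 0 <= rho i) ->
     valid Rad c rho ->
     rho 0%nat + rho 1%nat + rho 2%nat >= Rad / 2).
Proof.
  split.
  - exact (single_pupil_valid Rad).
  - intros c rho. exact (VertexCount.radii_sum_ge Rad c rho hR).
Qed.
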